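(* Let $x,v$ be positive integers with $xv\ge3$, and let $\lambda=(x,x,\dots,x)$ consist of $v$ copies of $x$ (so $n=vx$). Then $P(\lambda)\setminus\{0\}$ is isomorphic to the poset whose elements are \[ \{(r,p)\in\mathbb{Z}^2:0\le r<x,\ 0\le p<v\}\setminus\{(0,0),(x-1,v-1)\}, \] with strict order relation $(r,p)\prec(r',p')$ if and only if both $p>p'$ and $r'>r$.
   Context: For a vector $\lambda=(\lambda_1,\dots,\lambda_d)$ of positive integers with sum $n\ge2$, $\Delta_\lambda=\mathrm{conv}(e_1,\dots,e_d,\lambda)\subset\mathbb{R}^d$ has fundamental parallelepiped $\Pi_\lambda=\{\sum_{i=1}^d\gamma_i(1,e_i)+\gamma_{d+1}(1,\lambda):0\le\gamma_i<1\}\subset\mathbb{R}^{d+1}$. $P(\lambda)$ is $\Pi_\lambda\cap\mathbb{Z}^{d+1}$ ordered by $\sigma\preceq\mu$ iff $\mu-\sigma\in\Pi_\lambda\cap\mathbb{Z}^{d+1}$; the origin $0$ is its minimum. *)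

From HB Require Import structures.
From mathcomp Require Import all_boot all_order all_algebra.
From mathcomp Require Import reals.
Set Implicit Arguments. Unset Strict Implicit. Unset Printing Implicit Defensive.
Import Order.TTheory GRing.Theory Num.Theory.
Local Open Scope ring_scope.

(* Points of R^{d+1} / Z^{d+1} are indexed by 'I_d.+1; coordinate ord0 is the
   extra "1" coordinate, coordinate (lift ord0 i) is the i-th coordinate of R^d. *)

Definition gen_e (R : realType) (d : nat) (i : 'I_d) (k : 'I_d.+1) : R :=
  if k == ord0 then 1 else if k == lift ord0 i then 1 else 0.

Definition gen_lam (R : realType) (d : nat) (lam : 'I_d -> nat) (k : 'I_d.+1) : R :=
  if unlift ord0 k is Some j then (lam j)%:R else 1.

Definition inPi (R : realType) (d : nat) (lam : 'I_d -> nat)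
  (z : {ffun 'I_d.+1 -> int}) : Prop :=
  exists (g : 'I_d -> R) (c : R),
    (forall i, 0 <= g i < 1) /\ (0 <= c < 1) /\
    forall k : 'I_d.+1,
      (z k)%:~R = \sum_(i < d) g i * gen_e R i k + c * gen_lam R lam k.

Definition Ple (R : realType) (d : nat) (lam : 'I_d -> nat)
  (s m : {ffun 'I_d.+1 -> int}) : Prop :=
  inPi R lam [ffun k => m k - s k].

Definition zero_pt (d : nat) : {ffun 'I_d.+1 -> int} := [ffun => 0].

Definition inS (x v : nat) (q : int * int) : Prop :=
  [/\ 0 <= q.1 < x%:Z, 0 <= q.2 < v%:Z, q <> (0, 0) & q <> ((x%:Z - 1), (v%:Z - 1))].

Definition Sltn (q q' : int * int) : Prop := q'.2 < q.2 /\ q.1 < q'.1.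

From HB Require Import structures.
From mathcomp Require Import all_boot all_order all_algebra.
From mathcomp Require Import reals.
From mathcomp Require Import ring lra zify.
Set Implicit Arguments.
Unset Strict Implicit.
Unset Printing Implicit Defensive.
Import Order.TTheory GRing.Theory Num.Theory.
Local Open Scope ring_scope.

(* For constant [lambda = (x, ..., x)] a point of [Pi] is
   [sum_i gamma_i (1, e_i) + c (1, lambda)]; its last [v] coordinates
   [gamma_i + c x] are integers differing by less than 1, hence all equal, so
   every [gamma_i] is one [g] and the point is [(h, a, ..., a)] with
   [h = v g + c] and [a = g + c x].  Then [x h - a = (x v - 1) g], and
   integrality shows that the nonzero lattice points are exactly those with
   [1 <= a <= x] and [1 <= x h - a <= x v - 2].  With [r = a - 1] and
   [p = v - h] these say that [(p, r)] are the base-[x] digits of a number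
   strictly between [0] and [x v - 1], i.e. [(r, p)] lies in [S]; applying the
   same description to a difference of two such points gives the order. *)

Section Parallelepiped.

Variables (R : realType) (d : nat) (lam : 'I_d -> nat).

Lemma gen_e_ord0 (i : 'I_d) : gen_e R i ord0 = 1.
Proof. by rewrite /gen_e eqxx. Qed.

Lemma gen_e_lift (i j : 'I_d) : gen_e R i (lift ord0 j) = (i == j)%:R.
Proof.
by rewrite /gen_e eq_sym (negbTE (neq_lift _ _)) (inj_eq lift_inj) eq_sym; case: eqP.
Qed.

Lemma gen_lam_ord0 : gen_lam R lam ord0 = 1.
Proof. by rewrite /gen_lam unlift_none. Qed.

Lemma gen_lam_lift (j : 'I_d) : gen_lam R lam (lift ord0 j) = (lam j)%:R.
Proof. by rewrite /gen_lam liftK. Qed.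

Lemma inPiE (z : {ffun 'I_d.+1 -> int}) :
  inPi R lam z <->
  exists (g : 'I_d -> R) (c : R),
    [/\ forall i, 0 <= g i < 1, 0 <= c < 1,
        (z ord0)%:~R = \sum_(i < d) g i + c &
        forall j, (z (lift ord0 j))%:~R = g j + c * (lam j)%:R].
Proof.
have sum_ord0 (g : 'I_d -> R) : \sum_(i < d) g i * gen_e R i ord0 = \sum_(i < d) g i.
  by apply: eq_bigr => i _; rewrite gen_e_ord0 mulr1.
have sum_lift (g : 'I_d -> R) j : \sum_(i < d) g i * gen_e R i (lift ord0 j) = g j.
  rewrite (bigD1 j) //= gen_e_lift eqxx mulr1 big1 ?addr0 // => i /negbTE ij.
  by rewrite gen_e_lift ij mulr0.
split=> [[g [c [g01 [c01 ez]]]]|[g [c [g01 c01 ez0 ezS]]]]; exists g, c.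
  by split=> // [|j]; rewrite ez ?sum_ord0 ?gen_lam_ord0 ?mulr1 ?sum_lift ?gen_lam_lift.
do 2!split=> //; move=> k; case: (unliftP ord0 k) => [j ->|->].
  by rewrite ezS sum_lift gen_lam_lift.
by rewrite ez0 sum_ord0 gen_lam_ord0 mulr1.
Qed.

End Parallelepiped.

Definition diag_pt (v : nat) (h a : int) : {ffun 'I_v.+1 -> int} :=
  [ffun k => if k == ord0 then h else a].

Definition diag_inPi_cond (x v : nat) (h a : int) : Prop :=
  (h = 0 /\ a = 0) \/ (1 <= a <= x%:Z /\ 1 <= x%:Z * h - a <= x%:Z * v%:Z - 2).

Definition diag_inPi_real (R : realType) (x v : nat) (h a : int) : Prop :=
  exists g c : R,
    [/\ 0 <= g < 1, 0 <= c < 1, h%:~R = v%:R * g + c & a%:~R = g + c * x%:R].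

Definition pt_of_S (v : nat) (q : int * int) : {ffun 'I_v.+1 -> int} :=
  diag_pt v (v%:Z - q.2) (q.1 + 1).

Definition S_of_pt {v : nat} (z : {ffun 'I_v.+1 -> int}) : int * int :=
  (z (inord 1) - 1, v%:Z - z ord0).

Lemma intr_eq0_of_lt1 (R : numDomainType) (k : int) : -1 < (k%:~R : R) < 1 -> k = 0.
Proof.
move=> /andP[k_gtN1 k_lt1].
have : -1 < k by rewrite -(ltr_int R) intrN.
have : k < 1 by rewrite -(ltrz1 R).
lia.
Qed.

Section Arithmetic.

Variables x v : nat.
Hypothesis x_gt0 : (0 < x)%N.

Lemma inS_digits r p :
  inS x v (r, p) <-> 0 <= r < x%:Z /\ 1 <= x%:Z * p + r <= x%:Z * v%:Z - 2.
Proof.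
rewrite /inS /=; split=> [[/andP[r0 r1] /andP[p0 p1] n0 n1] | [r01 S12]].
  split; first by rewrite r0 r1.
  apply/andP; split.
    have [p_eq0|] := eqVneq p 0; last by nia.
    have : r != 0 by apply: contra_notN n0 => /eqP ->; rewrite p_eq0.
    by rewrite p_eq0; lia.
  have [p_eq|] := eqVneq p (v%:Z - 1); last by nia.
  have : r != x%:Z - 1 by apply: contra_notN n1 => /eqP ->; rewrite p_eq.
  by rewrite p_eq; nia.
split=> //.
- by apply/andP; split; nia.
- by case=> r_eq0 p_eq0; move: S12; rewrite r_eq0 p_eq0; lia.
- by case=> r_eq p_eq; move: S12; rewrite r_eq p_eq; nia.
Qed.

Lemma diag_indiag_inPi_cond_pt_of_S q :
  diag_inPi_cond x v (v%:Z - q.2) (q.1 + 1) <-> q = (-1, v%:Z) \/ inS x v q.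
Proof.
case: q => r p; rewrite inS_digits /diag_inPi_cond /=.
split=> [[[p_eq r_eq] | [ra Ta]] | [[-> ->] | [ra Ta]]].
- by left; congr pair; lia.
- by right; split; lia.
- by left; split; lia.
- by right; split; lia.
Qed.

Lemma diag_indiag_inPi_cond_sub q q' : inS x v q -> inS x v q' ->
  diag_inPi_cond x v (q.2 - q'.2) (q'.1 - q.1) <-> q = q' \/ Sltn q q'.
Proof.
case: q q' => r p [r' p']; rewrite /inS /diag_inPi_cond /Sltn /=.
move=> [/andP[r0 r1] /andP[p0 p1] _ _] [/andP[r0' r1'] /andP[p0' p1'] _ _].
split=> [[[p_eq r_eq] | [ra Ta]] | [[-> ->] | [p_lt r_lt]]].
- by left; congr pair; lia.
- by right; split; nia.
- by left; split; lia.
- by right; split; nia.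
Qed.

End Arithmetic.

Section DiagonalPoints.

Variable v : nat.

Lemma diag_pt_ord0 h a : diag_pt v h a ord0 = h.
Proof. by rewrite ffunE eqxx. Qed.

Lemma diag_pt_lift h a j : diag_pt v h a (lift ord0 j) = a.
Proof. by rewrite ffunE eq_sym (negbTE (neq_lift _ _)). Qed.

Lemma diag_pt00 : diag_pt v 0 0 = zero_pt v.
Proof. by apply/ffunP => k; rewrite !ffunE if_same. Qed.

Lemma pt_of_S_sub q q' :
  [ffun k => pt_of_S v q' k - pt_of_S v q k] = diag_pt v (q.2 - q'.2) (q'.1 - q.1).
Proof. by apply/ffunP => k; rewrite !ffunE; case: ifP => _; ring. Qed.

Hypothesis v_gt0 : (0 < v)%N.

Lemma diag_pt_inord1 h a : diag_pt v h a (inord 1) = a.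
Proof.
have -> : inord 1 = lift ord0 (Ordinal v_gt0) by apply: val_inj; rewrite /= inordK.
exact: diag_pt_lift.
Qed.

Lemma diag_pt_inj h a h' a' : diag_pt v h a = diag_pt v h' a' -> h = h' /\ a = a'.
Proof.
move=> e; split; first by rewrite -(diag_pt_ord0 h a) e diag_pt_ord0.
by rewrite -(diag_pt_inord1 h a) e diag_pt_inord1.
Qed.

Lemma pt_of_SK : cancel (pt_of_S v) (@S_of_pt v).
Proof. by case=> r p; rewrite /S_of_pt diag_pt_ord0 diag_pt_inord1 addrK opprB addrC subrK. Qed.

Lemma S_of_diag_ptK h a : pt_of_S v (S_of_pt (diag_pt v h a)) = diag_pt v h a.
Proof. by rewrite /pt_of_S /S_of_pt diag_pt_ord0 diag_pt_inord1 opprB addrC subrK subrK. Qed.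

End DiagonalPoints.

Section ConstantLambda.

Variables (R : realType) (x v : nat).
Hypotheses (x_gt0 : (0 < x)%N) (v_gt0 : (0 < v)%N) (xv_gt1 : (1 < x * v)%N).

Let lam : 'I_v -> nat := fun _ => x.

Lemma inPi_constE z :
  inPi R lam z <->
  exists h a, z = diag_pt v h a /\ diag_inPi_real R x v h a.
Proof.
split=> [/inPiE [g [c [g01 c01 ez0 ezS]]] | [h [a [-> [g [c [g01 c01 eh ea]]]]]]].
  pose j0 := Ordinal v_gt0.
  have ezS_j0 j : z (lift ord0 j) = z (lift ord0 j0).
    apply/eqP; rewrite -subr_eq0; apply/eqP; apply: (@intr_eq0_of_lt1 R).
    rewrite intrB !ezS; move: (g01 j) (g01 j0) => /andP[? ?] /andP[? ?].
    by apply/andP; split; lra.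
  have g_j0 j : g j = g j0 by apply: (addIr (c * x%:R)); rewrite -!ezS ezS_j0.
  exists (z ord0), (z (lift ord0 j0)); split.
    apply/ffunP => k; rewrite ffunE; case: (unliftP ord0 k) => [j ->|->].
      by rewrite eq_sym (negbTE (neq_lift _ _)) ezS_j0.
    by rewrite eqxx.
  exists (g j0), c; split=> //.
  by rewrite ez0 (eq_bigr _ (fun j _ => g_j0 j)) sumr_const card_ord mulr_natl.
apply/inPiE; exists (fun=> g), c; split=> // [|j]; last by rewrite diag_pt_lift ea.
by rewrite diag_pt_ord0 eh sumr_const card_ord mulr_natl.
Qed.

Lemma diag_inPi_realE h a : diag_inPi_real R x v h a <-> diag_inPi_cond x v h a.
Proof.
have x_ge1 : (1 : R) <= x%:R by rewrite (ler_nat R 1).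
have xv_ge2 : (2 : R) <= x%:R * v%:R by rewrite -natrM (ler_nat R 2).
have intr_xv k : ((x%:Z * v%:Z - k)%:~R : R) = x%:R * v%:R - k%:~R.
  by rewrite intrB intrM -!pmulrn.
split=> [[g [c [/andP[g0 g1] /andP[c0 c1] eh ea]]] | ].
  have eT : ((x%:Z * h - a)%:~R : R) = (x%:R * v%:R - 1) * g.
    by rewrite intrB intrM -pmulrn eh ea; ring.
  have [T_le0 | T_gt0] := lerP (x%:Z * h - a) 0.
    have g_eq0 : g = 0.
      have : ((x%:Z * h - a)%:~R : R) <= 0 by rewrite lerz0.
      by rewrite eT; nra.
    move: eh ea; rewrite g_eq0 mulr0 !add0r => eh ea.
    have h_eq0 : h = 0.
      have : 0 <= (h%:~R : R) < 1 by rewrite eh c0 c1.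
      by rewrite ler0z ltrz1; lia.
    move: eh; rewrite h_eq0 => /esym c_eq0.
    by left; split=> //; apply/eqP; rewrite -(intr_eq0 R) ea c_eq0 mul0r.
  have g_gt0 : 0 < g.
    have : (0 : R) < (x%:Z * h - a)%:~R by rewrite ltr0z.
    by rewrite eT; nra.
  have a_gt0 : 0 < a by rewrite -(ltr0z R) ea; nra.
  have a_le : a < x%:Z + 1 by rewrite -(ltr_int R) ea intrD -pmulrn; nra.
  have T_lt : x%:Z * h - a < x%:Z * v%:Z - 1 by rewrite -(ltr_int R) eT intr_xv; nra.
  by right; lia.
case=> [[-> ->] | [/andP[a1 a2] /andP[T1 T2]]].
  by exists 0, 0; rewrite !lexx !ltr01 !mulr0 !mul0r !addr0.
have a1R : (1 : R) <= a%:~R by rewrite ler1z.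
have a2R : (a%:~R : R) <= x%:R by rewrite pmulrn ler_int.
have T1R : (1 : R) <= (x%:Z * h - a)%:~R by rewrite ler1z.
have T2R : ((x%:Z * h - a)%:~R : R) <= x%:R * v%:R - 2 by rewrite -(intr_xv 2) ler_int.
(* [g] and [c] are forced: [x h - a = (x v - 1) g] and [a = g + c x] *)
pose g := (x%:Z * h - a)%:~R / (x%:R * v%:R - 1) : R.
have eT : g * (x%:R * v%:R - 1) = (x%:Z * h - a)%:~R by rewrite divfK //; apply/eqP; lra.
pose c := (a%:~R - g) / x%:R : R.
have xR_neq0 : x%:R != 0 :> R by apply/eqP; lra.
have ec : c * x%:R = a%:~R - g by rewrite divfK.
have g_gt0 : 0 < g by nra.
have g_lt1 : g < 1 by nra.
exists g, c; split; [by rewrite (ltW g_gt0) | by apply/andP; split; nra | | by lra].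
apply: (mulfI xR_neq0).
have : (x%:Z * h - a)%:~R = x%:R * h%:~R - a%:~R :> R by rewrite intrB intrM -pmulrn.
by nra.
Qed.

Lemma inPi_diag_ptE h a : inPi R lam (diag_pt v h a) <-> diag_inPi_cond x v h a.
Proof.
rewrite inPi_constE -diag_inPi_realE; split=> [[h' [a' [/diag_pt_inj [//|<- <-]]]] // | rep].
by exists h, a.
Qed.

Lemma inPi_diag z : inPi R lam z -> z = diag_pt v (z ord0) (z (inord 1)).
Proof. by case/inPi_constE=> [h [a [-> _]]]; rewrite diag_pt_ord0 diag_pt_inord1. Qed.

Lemma nonzero_inPiE z :
  inPi R lam z /\ z <> zero_pt v <-> exists2 q, inS x v q & z = pt_of_S v q.
Proof.
split=> [[Pz z_neq0] | [q Sq ->]].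
  have z_S : pt_of_S v (S_of_pt z) = z by rewrite (inPi_diag Pz) S_of_diag_ptK.
  exists (S_of_pt z) => //.
  move: Pz; rewrite -{1}z_S /pt_of_S inPi_diag_ptE (diag_indiag_inPi_cond_pt_of_S _ x_gt0) => -[S_eq | //].
  by case: z_neq0; rewrite -z_S S_eq /pt_of_S /= subrr addNr diag_pt00.
split; first by rewrite /pt_of_S inPi_diag_ptE (diag_indiag_inPi_cond_pt_of_S _ x_gt0); right.
move/ffunP/(_ ord0); rewrite diag_pt_ord0 ffunE.
by case: q Sq => r p; rewrite /inS /= => -[_ /andP[_ p_lt] _ _]; lia.
Qed.

Lemma Ple_pt_of_S q q' : inS x v q -> inS x v q' ->
  Ple R lam (pt_of_S v q) (pt_of_S v q') <-> q = q' \/ Sltn q q'.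
Proof. by move=> Sq Sq'; rewrite /Ple pt_of_S_sub inPi_diag_ptE (diag_indiag_inPi_cond_sub x_gt0). Qed.

End ConstantLambda.

Theorem theorem4p1 (R : realType) (x v : nat) :
  (0 < x)%N -> (0 < v)%N -> (3 <= x * v)%N ->
  let lam : 'I_v -> nat := fun _ => x in
  let P := fun z : {ffun 'I_v.+1 -> int} => inPi R lam z /\ z <> zero_pt v in
  exists f : {ffun 'I_v.+1 -> int} -> int * int,
    [/\ (forall z, P z -> inS x v (f z)),
        (forall q, inS x v q -> exists2 z, P z & f z = q),
        (forall z1 z2, P z1 -> P z2 -> f z1 = f z2 -> z1 = z2) &
        (forall s m, P s -> P m ->
           (Ple R lam s m <-> (f s = f m \/ Sltn (f s) (f m))))].
Proof.
move=> x_gt0 v_gt0 /ltnW xv_gt1 lam P.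
have PE z : P z <-> exists2 q, inS x v q & z = pt_of_S v q by apply: nonzero_inPiE.
have S_ptK := pt_of_SK v_gt0.
exists S_of_pt; split.
- by move=> _ /PE[q Sq ->]; rewrite S_ptK.
- by move=> q Sq; exists (pt_of_S v q); [apply/PE; exists q | rewrite S_ptK].
- by move=> _ _ /PE[q _ ->] /PE[q' _ ->]; rewrite !S_ptK => ->.
- by move=> _ _ /PE[q Sq ->] /PE[q' Sq' ->]; rewrite !S_ptK; exact: Ple_pt_of_S.
Qed.
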